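(* Under the hypotheses of the setting below (with $\mu_+(\infty)\le1$, $\mu_-(\infty)<\infty$, (A1), (A4), (A5), (A6)), let $0<\mu_0\le\mu_1$ be constants with $\mu_0\le f'\le\mu_1$ and $\mu_0\rho\le f(\rho)\le\mu_1\rho$ on $[0,\infty)$, and $\eta_0=\min\{\mu_0/\mu_1,q_0^{-1}(\mu_1/\mu_0)\}$, $\eta_1=\max\{\mu_1/\mu_0,q_1^{-1}(\mu_0/\mu_1)\}$. If $r$ is a regular equilibrium solution with $r(1)=\lambda>0$, then $$\lambda\rho^{c_1}\le r(\rho)\le\lambda\rho^{c_0}\qquad\text{for all }\rho\in(0,1],$$ where $c_0=\eta_0\mu_0/\mu_1$ and $c_1=\eta_1\mu_1/\mu_0$.
   Context: Setting: $n\ge2$; $\kappa$ continuous on $[0,\infty)$, $\kappa_\pm=\max\{\pm\kappa,0\}$, $\mu_\pm(\infty)=\int_0^\infty s\kappa_\pm(s)ds$; $f$ solves $f''+\kappa f=0$, $f(0)=0$, $f'(0)=1$. $\Phi(v_1,\dots,v_n)=\sum_i\phi(v_i)+h(v_1\cdots v_n)$, $\tau(\rho)=f(r(\rho))/f(\rho)$. An equilibrium solution with $r(1)=\lambda$ is $r\in C^1(0,1]$, twice differentiable on $(0,1)$, $r'>0$ on $(0,1]$, $r(0):=\lim_{\rho\to0^+}r(\rho)\ge0$, $r(1)=\lambda$, satisfying on $(0,1)$ $$f(\rho)\big[\phi''(r')+h''(r'\tau^{n-1})\tau^{2(n-1)}\big]r''=(n-1)\big[f'(r)\phi'(\tau)-f'(\rho)\phi'(r')\big]-(n-1)\big(f'(r)r'-f'(\rho)\tau\big)h''(r'\tau^{n-1})\,r'\tau^{2n-3};$$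 regular means $r(0)=0$. (A1) $h$ is $C^2$ and strictly convex. (A4) $\phi:(0,\infty)\to(0,\infty)$ is $C^2$ and convex. (A5) $v\phi'(v)$ is increasing. (A6) there is $t_0\ge0$ with $\phi'(t_0)=0$; $q_1(s)=\sup_{v>t_0}\phi'(v)/\phi'(sv)$ ($s\ge1$), $q_0(s)=\inf_{v>t_0/s}\phi'(v)/\phi'(sv)$ ($s\in(0,1]$) satisfy $q_1\in C^1[1,\infty)$, $q_0\in C^1(0,1]$, $q_1(s)\to0$ as $s\to\infty$, $q_0(s)\to\infty$ as $s\to0^+$, $q_1'<0$, $q_0'<0$. *)

From Stdlib Require Import Reals Lra.
Open Scope R_scope.

Definition deriv_within (D : R -> Prop) (f g : R -> R) (x : R) : Prop :=
  forall eps, 0 < eps -> exists delta, 0 < delta /\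
    forall h, h <> 0 -> D (x + h) -> Rabs h < delta ->
      Rabs ((f (x + h) - f x) / h - g x) < eps.

Definition cont_within (D : R -> Prop) (f : R -> R) (x : R) : Prop :=
  forall eps, 0 < eps -> exists delta, 0 < delta /\
    forall y, D y -> Rabs (y - x) < delta -> Rabs (f y - f x) < eps.

Definition lim_within (D : R -> Prop) (f : R -> R) (a l : R) : Prop :=
  forall eps, 0 < eps -> exists delta, 0 < delta /\
    forall y, D y -> y <> a -> Rabs (y - a) < delta -> Rabs (f y - l) < eps.

Definition lim_at_infty (f : R -> R) (l : R) : Prop :=
  forall eps, 0 < eps -> exists M, forall x, M <= x -> Rabs (f x - l) < eps.

Definition to_infty_at_0plus (f : R -> R) : Prop :=
  forall A, exists delta, 0 < delta /\ forall x, 0 < x < delta -> A < f x.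

Definition nonnegR (x : R) : Prop := 0 <= x.
Definition posR (x : R) : Prop := 0 < x.

Definition improper_int_0_inf (g : R -> R) (L : R) : Prop :=
  (forall T, 0 <= T -> inhabited (Riemann_integrable g 0 T)) /\
  forall eps, 0 < eps -> exists M, forall T (pr : Riemann_integrable g 0 T),
    M <= T -> Rabs (RiemannInt pr - L) < eps.

Definition pos_part (x : R) : R := Rmax x 0.
Definition neg_part (x : R) : R := Rmax (- x) 0.

Definition is_glb (E : R -> Prop) (m : R) : Prop :=
  (forall x, E x -> m <= x) /\ (forall b, (forall x, E x -> b <= x) -> b <= m).

Definition convex_on (D : R -> Prop) (g : R -> R) : Prop :=
  forall x y t, D x -> D y -> 0 <= t <= 1 ->
    g (t * x + (1 - t) * y) <= t * g x + (1 - t) * g y.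

Definition strictly_convex_on (D : R -> Prop) (g : R -> R) : Prop :=
  forall x y t, D x -> D y -> x <> y -> 0 < t < 1 ->
    g (t * x + (1 - t) * y) < t * g x + (1 - t) * g y.

Definition C2_on (D : R -> Prop) (g dg d2g : R -> R) : Prop :=
  (forall x, D x -> deriv_within D g dg x) /\
  (forall x, D x -> deriv_within D dg d2g x) /\
  (forall x, D x -> cont_within D d2g x).

Definition equilibrium_eq (n : nat) (f df phi' phi'' h'' r dr d2r : R -> R)
  (rho : R) : Prop :=
  let tau := f (r rho) / f rho in
  f rho * (phi'' (dr rho) + h'' (dr rho * tau ^ (n - 1)) * tau ^ (2 * (n - 1)))
    * d2r rho
  = INR (n - 1) * (df (r rho) * phi' tau - df rho * phi' (dr rho))
    - INR (n - 1) * (df (r rho) * dr rho - df rho * tau)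
      * h'' (dr rho * tau ^ (n - 1)) * dr rho * tau ^ (2 * n - 3).

From Stdlib Require Import Reals Lra Lia.
Open Scope R_scope.

(* Write tau = f(r)/f(rho) ("stretch") and P = r'/tau ("ratio").  The proof
   shows that P stays in the band [eta0, eta1] on (0,1); since tau is
   comparable to r/rho with constants mu0/mu1 and mu1/mu0, this gives the
   logarithmic-derivative bounds c0 r <= rho r' <= c1 r, which integrate from
   rho to 1 to the claimed power bounds. *)

Lemma deriv_within_interior (D : R -> Prop) (g dg : R -> R) (x d : R) :
  0 < d -> (forall y, Rabs (y - x) < d -> D y) ->
  deriv_within D g dg x -> derivable_pt_lim g x (dg x).
Proof.
  intros Hd HD Hg eps Heps.
  destruct (Hg eps Heps) as [del [Hdel Hq]].
  assert (Hm : 0 < Rmin del d) by (apply Rmin_pos; lra).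
  exists (mkposreal _ Hm). intros h hn hl. simpl in hl.
  pose proof (Rmin_l del d). pose proof (Rmin_r del d).
  apply Hq; [exact hn| |lra].
  apply HD. replace (x + h - x) with h by ring. lra.
Qed.

Lemma deriv_within_open (D : R -> Prop) (g dg : R -> R) (a b x : R) :
  (forall y, a < y < b -> D y) -> a < x < b ->
  deriv_within D g dg x -> derivable_pt_lim g x (dg x).
Proof.
  intros HD Hx. apply (deriv_within_interior D g dg x (Rmin (x - a) (b - x))).
  - apply Rmin_pos; lra.
  - intros y Hy. apply HD. apply Rabs_def2 in Hy.
    pose proof (Rmin_l (x - a) (b - x)). pose proof (Rmin_r (x - a) (b - x)). lra.
Qed.

Lemma neg_deriv_drop_right (D : R -> Prop) (g dg : R -> R) (x b : R) :
  x < b -> (forall z, x < z < b -> D z) ->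
  deriv_within D g dg x -> dg x < 0 -> exists u, x < u < b /\ g u < g x.
Proof.
  intros xb HD Hg Hneg.
  destruct (Hg (- dg x)) as [del [Hdel Hq]]; [lra|].
  set (h := Rmin (del / 2) ((b - x) / 2)).
  assert (h0 : 0 < h) by (apply Rmin_pos; lra).
  pose proof (Rmin_l (del / 2) ((b - x) / 2)). pose proof (Rmin_r (del / 2) ((b - x) / 2)).
  exists (x + h). split; [unfold h in *; lra|].
  specialize (Hq h ltac:(lra) ltac:(apply HD; unfold h in *; lra)
                ltac:(rewrite Rabs_right; unfold h in *; lra)).
  apply Rabs_def2 in Hq.
  set (q := (g (x + h) - g x) / h) in Hq.
  assert (E : g (x + h) - g x = q * h) by (unfold q; field; lra).
  nra.
Qed.

Lemma neg_deriv_drop_left (D : R -> Prop) (g dg : R -> R) (a x : R) :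
  a < x -> (forall z, a < z < x -> D z) ->
  deriv_within D g dg x -> dg x < 0 -> exists u, a < u < x /\ g x < g u.
Proof.
  intros ax HD Hg Hneg.
  destruct (Hg (- dg x)) as [del [Hdel Hq]]; [lra|].
  set (h := Rmin (del / 2) ((x - a) / 2)).
  assert (h0 : 0 < h) by (apply Rmin_pos; lra).
  pose proof (Rmin_l (del / 2) ((x - a) / 2)). pose proof (Rmin_r (del / 2) ((x - a) / 2)).
  exists (x + - h). split; [unfold h in *; lra|].
  specialize (Hq (- h) ltac:(lra) ltac:(apply HD; unfold h in *; lra)
                ltac:(rewrite Rabs_left; unfold h in *; lra)).
  apply Rabs_def2 in Hq.
  set (q := (g (x + - h) - g x) / - h) in Hq.
  assert (E : g (x + - h) - g x = - (q * h)) by (unfold q; field; lra).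
  nra.
Qed.

Lemma deriv_within_cont (D : R -> Prop) (g dg : R -> R) (x : R) :
  deriv_within D g dg x -> cont_within D g x.
Proof.
  intros Hg eps Heps.
  destruct (Hg 1 Rlt_0_1) as [del [Hdel Hq]].
  set (M := Rabs (dg x) + 1).
  assert (HM : 0 < M) by (pose proof (Rabs_pos (dg x)); unfold M; lra).
  exists (Rmin del (eps / M)). split; [apply Rmin_pos; [lra| apply Rdiv_lt_0_compat; lra]|].
  intros y Dy Hy.
  pose proof (Rmin_l del (eps / M)). pose proof (Rmin_r del (eps / M)).
  destruct (Req_dec y x) as [->|Hne]; [rewrite Rminus_diag, Rabs_R0; lra|].
  set (h := y - x) in Hy.
  specialize (Hq h ltac:(unfold h; lra)).
  replace (x + h) with y in Hq by (unfold h; ring).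
  specialize (Hq Dy ltac:(lra)).
  set (q := (g y - g x) / h) in Hq.
  assert (E : g y - g x = q * h) by (unfold q; field; unfold h; lra).
  assert (Hqb : Rabs q <= M).
  { replace q with ((q - dg x) + dg x) by ring.
    pose proof (Rabs_triang (q - dg x) (dg x)). unfold M; lra. }
  assert (Hh : Rabs h * M < eps).
  { replace eps with (eps / M * M) by (field; lra). apply Rmult_lt_compat_r; lra. }
  rewrite E, Rabs_mult. pose proof (Rabs_pos q). pose proof (Rabs_pos h). nra.
Qed.

Lemma cont_within_limit1_in (D : R -> Prop) (g : R -> R) (x : R) :
  cont_within D g x -> limit1_in g D (g x) x.
Proof.
  intros Hg eps Heps. destruct (Hg eps Heps) as [d [Hd Hy]].
  exists d. split; [lra|]. intros y [Dy Hyx]. exact (Hy y Dy Hyx).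
Qed.

Lemma nondecreasing_of_deriv_nonneg (g g' : R -> R) (x y : R) :
  x <= y -> (forall z, x <= z <= y -> derivable_pt_lim g z (g' z)) ->
  (forall z, x < z < y -> 0 <= g' z) -> g x <= g y.
Proof.
  intros [xy| <-] Hd Hs; [|lra].
  destruct (MVT_cor2 g g' x y xy Hd) as [c [Heq Hc]].
  specialize (Hs c Hc). nra.
Qed.

Lemma strict_decrease_of_neg_deriv (D : R -> Prop) (g dg : R -> R) (x y : R) :
  x < y -> (forall z, x <= z <= y -> D z) ->
  (forall z, x <= z <= y -> deriv_within D g dg z /\ dg z < 0) -> g y < g x.
Proof.
  intros xy HD Hg.
  destruct (Hg x ltac:(lra)) as [Hgx Hnx].
  destruct (neg_deriv_drop_right D g dg x y xy ltac:(intros; apply HD; lra) Hgx Hnx)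
    as [u [Hu Hgu]].
  destruct (Hg y ltac:(lra)) as [Hgy Hny].
  destruct (neg_deriv_drop_left D g dg u y ltac:(lra) ltac:(intros; apply HD; lra) Hgy Hny)
    as [v [Hv Hgv]].
  assert (Hmid : - g u <= - g v).
  { apply (nondecreasing_of_deriv_nonneg (fun z => - g z) (fun z => - dg z)); [lra| |].
    - intros z Hz. apply derivable_pt_lim_opp.
      apply (deriv_within_open D g dg x y); [intros; apply HD| |apply Hg]; lra.
    - intros z Hz. destruct (Hg z ltac:(lra)). lra. }
  lra.
Qed.

Lemma barrier_from_left (g g' : R -> R) (a b k : R) :
  (forall z, a < z < b -> derivable_pt_lim g z (g' z)) ->
  (forall z, a < z < b -> g z < k -> 0 < g' z) ->
  forall x y, a < x -> x <= y -> y < b -> g y < k -> g x < k.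
Proof.
  intros Hd Hs x y ax xy yb gy.
  destruct (Rlt_or_le (g x) k) as [|gx]; [assumption|exfalso].
  (* [s] is the last point of [x, y] where [g >= k] *)
  set (E := fun z => x <= z <= y /\ k <= g z).
  assert (HB : bound E) by (exists y; intros z [[_ ?] _]; assumption).
  destruct (completeness E HB (ex_intro _ x (conj (conj (Rle_refl x) xy) gx)))
    as [s [Hub Hlub]].
  assert (xs : x <= s) by (apply Hub; split; lra).
  assert (sy : s <= y) by (apply Hlub; intros z [[_ ?] _]; assumption).
  assert (ks : k <= g s).
  { destruct (Rlt_or_le (g s) k) as [gs|]; [exfalso|assumption].
    assert (Hc : continuity_pt g s).
    { apply derivable_continuous_pt. exists (g' s). apply Hd. lra. }
    destruct (Hc (k - g s)) as [alp [Halp Hnear]]; [lra|].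
    assert (s <= s - alp); [|lra].
    apply Hlub. intros z [Hz1 Hz2].
    destruct (Rle_or_lt z (s - alp)) as [|Hlt]; [assumption|exfalso].
    assert (zs : z <= s) by (apply Hub; split; assumption).
    destruct (Req_dec z s) as [->|Hne]; [lra|].
    assert (Hgz : R_dist (g z) (g s) < k - g s).
    { apply Hnear. split; [split; [exact I| congruence]|].
      simpl. unfold R_dist. rewrite Rabs_left; lra. }
    unfold R_dist in Hgz. apply Rabs_def2 in Hgz. lra. }
  assert (sy' : s < y) by (destruct sy as [|E']; [assumption|subst; lra]).
  destruct (MVT_cor2 g g' s y sy') as [c [Heq Hc]].
  { intros c Hc. apply Hd. lra. }
  assert (gc : g c < k).
  { destruct (Rlt_or_le (g c) k) as [|Hk]; [assumption|exfalso].
    assert (c <= s) by (apply Hub; split; [lra|assumption]). lra. }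
  specialize (Hs c ltac:(lra) gc). nra.
Qed.

Lemma le_at_right_end (g g' : R -> R) :
  (forall z, 0 < z < 1 -> derivable_pt_lim g z (g' z)) ->
  (forall z, 0 < z < 1 -> 0 <= g' z) ->
  limit1_in g (fun y => 0 < y <= 1) (g 1) 1 ->
  forall x, 0 < x <= 1 -> g x <= g 1.
Proof.
  intros Hd Hs Hl x [x0 [x1| ->]]; [|lra].
  destruct (Rle_or_lt (g x) (g 1)) as [|Hc]; [assumption|exfalso].
  destruct (Hl (g x - g 1)) as [alp [Halp Hnear]]; [lra|].
  set (y := Rmax x (1 - alp / 2)).
  pose proof (Rmax_l x (1 - alp / 2)). pose proof (Rmax_r x (1 - alp / 2)).
  assert (y1 : y < 1) by (apply Rmax_lub_lt; lra).
  assert (Hgy : R_dist (g y) (g 1) < g x - g 1).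
  { apply Hnear. split; [unfold y in *; lra|].
    simpl. unfold R_dist. rewrite Rabs_left; unfold y in *; lra. }
  unfold R_dist in Hgy. apply Rabs_def2 in Hgy.
  assert (g x <= g y); [|lra].
  apply (nondecreasing_of_deriv_nonneg g g'); [unfold y in *; lra| |];
    intros z Hz; [apply Hd|apply Hs]; unfold y in *; lra.
Qed.

Lemma Rpower_1_base (c : R) : Rpower 1 c = 1.
Proof. unfold Rpower. rewrite ln_1, Rmult_0_r. apply exp_0. Qed.

Lemma Rpower_limit_at_1 (c : R) :
  limit1_in (fun z => Rpower z c) (fun y => 0 < y <= 1) 1 1.
Proof.
  rewrite <- (Rpower_1_base c) at 1.
  assert (Hc : continuity_pt (fun z => Rpower z c) 1).
  { apply derivable_continuous_pt. eexists. apply derivable_pt_lim_power. lra. }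
  intros eps Heps. destruct (Hc eps Heps) as [d [Hd Hnear]].
  exists d. split; [assumption|]. intros y [Dy Hy].
  destruct (Req_dec y 1) as [->|Hne].
  - simpl. unfold R_dist. rewrite Rminus_diag, Rabs_R0. lra.
  - apply Hnear. split; [split; [exact I| congruence]|assumption].
Qed.

Lemma power_upper_of_log_derivative (u du : R -> R) (c : R) :
  (forall z, 0 < z < 1 -> derivable_pt_lim u z (du z)) ->
  (forall z, 0 < z < 1 -> c * u z <= z * du z) ->
  cont_within (fun y => 0 < y <= 1) u 1 ->
  forall x, 0 < x <= 1 -> u x <= u 1 * Rpower x c.
Proof.
  intros Hd Hs Hc x Hx.
  set (g := fun z => u z * Rpower z (- c)).
  assert (Hg : g x <= g 1).
  { apply (le_at_right_end g
      (fun z => du z * Rpower z (- c) + u z * (- c * Rpower z (- c - 1)))); [| | |exact Hx].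
    - intros z Hz. apply (derivable_pt_lim_mult u (fun z => Rpower z (- c))); [auto|].
      apply derivable_pt_lim_power. lra.
    - intros z Hz.
      assert (E : Rpower z (- c - 1) = Rpower z (- c) * / z).
      { unfold Rminus. rewrite Rpower_plus, (Rpower_Ropp z 1), Rpower_1; lra. }
      rewrite E.
      assert (Hp : 0 < Rpower z (- c)) by apply exp_pos.
      assert (Hzi : 0 < / z) by (apply Rinv_0_lt_compat; lra).
      replace (du z * Rpower z (- c) + u z * (- c * (Rpower z (- c) * / z)))
        with (Rpower z (- c) * / z * (z * du z - c * u z)) by (field; lra).
      specialize (Hs z Hz). apply Rmult_le_pos; [apply Rmult_le_pos|]; lra.
    - replace (g 1) with (u 1 * 1) by (unfold g; rewrite Rpower_1_base; ring).
      apply (limit_mul u (fun z => Rpower z (- c))).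
      + apply cont_within_limit1_in. exact Hc.
      + apply Rpower_limit_at_1. }
  unfold g in Hg. rewrite Rpower_1_base, Rmult_1_r in Hg.
  assert (Hp : 0 < Rpower x c) by apply exp_pos.
  assert (E : Rpower x (- c) * Rpower x c = 1).
  { rewrite <- Rpower_plus. replace (- c + c) with 0 by ring. apply Rpower_O. lra. }
  replace (u x) with (u x * Rpower x (- c) * Rpower x c)
    by (rewrite Rmult_assoc, E; ring).
  apply Rmult_le_compat_r; lra.
Qed.

Lemma power_lower_of_log_derivative (u du : R -> R) (c : R) :
  (forall z, 0 < z < 1 -> derivable_pt_lim u z (du z)) ->
  (forall z, 0 < z < 1 -> z * du z <= c * u z) ->
  cont_within (fun y => 0 < y <= 1) u 1 ->
  forall x, 0 < x <= 1 -> u 1 * Rpower x c <= u x.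
Proof.
  intros Hd Hs Hc x Hx.
  assert (H := power_upper_of_log_derivative (fun z => - u z) (fun z => - du z) c).
  enough (- u x <= - u 1 * Rpower x c) by lra.
  apply H; [| | |exact Hx].
  - intros z Hz. apply derivable_pt_lim_opp. auto.
  - intros z Hz. specialize (Hs z Hz). lra.
  - intros eps Heps. destruct (Hc eps Heps) as [d [Hd0 Hnear]].
    exists d. split; [assumption|]. intros y Dy Hy.
    replace (- u y - - u 1) with (- (u y - u 1)) by ring.
    rewrite Rabs_Ropp. auto.
Qed.

Lemma strictly_convex_convex (g : R -> R) :
  strictly_convex_on posR g -> convex_on posR g.
Proof.
  intros H x y t Dx Dy [t0 t1].
  destruct (Req_dec x y) as [->|Hne].
  { replace (t * y + (1 - t) * y) with y by ring. lra. }
  destruct (Req_dec t 0) as [->|N0].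
  { replace (0 * x + (1 - 0) * y) with y by ring. lra. }
  destruct (Req_dec t 1) as [->|N1].
  { replace (1 * x + (1 - 1) * y) with x by ring. lra. }
  left. apply H; auto; lra.
Qed.

Lemma convex_tangent_below_chord (g dg : R -> R) (x y : R) :
  0 < x < y -> convex_on posR g -> deriv_within posR g dg x ->
  dg x <= (g y - g x) / (y - x).
Proof.
  intros [x0 xy] Hc Hd.
  set (S := (g y - g x) / (y - x)).
  destruct (Rle_or_lt (dg x) S) as [|Hlt]; [assumption|exfalso].
  destruct (Hd (dg x - S)) as [del [Hdel Hq]]; [lra|].
  set (h := Rmin (del / 2) (y - x)).
  pose proof (Rmin_l (del / 2) (y - x)). pose proof (Rmin_r (del / 2) (y - x)).
  assert (h0 : 0 < h) by (apply Rmin_pos; lra).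
  specialize (Hq h ltac:(lra) ltac:(unfold posR, h in *; lra)
    ltac:(rewrite Rabs_right; unfold h in *; lra)).
  apply Rabs_def2 in Hq.
  set (t := h / (y - x)).
  assert (Ht : 0 <= t <= 1).
  { unfold t. split; [apply Rle_mult_inv_pos; lra|].
    apply (Rmult_le_reg_r (y - x)); [lra|]. field_simplify; unfold h in *; lra. }
  specialize (Hc y x t ltac:(unfold posR; lra) ltac:(unfold posR; lra) Ht).
  replace (t * y + (1 - t) * x) with (x + h) in Hc by (unfold t; field; lra).
  assert ((g (x + h) - g x) / h <= S); [|lra].
  unfold S. apply (Rmult_le_reg_r h); [lra|].
  replace ((g (x + h) - g x) / h * h) with (g (x + h) - g x) by (field; lra).
  replace ((g y - g x) / (y - x) * h) with (t * (g y - g x)) by (unfold t; field; lra).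
  lra.
Qed.

Lemma convex_tangent_above_chord (g dg : R -> R) (x y : R) :
  0 < x < y -> convex_on posR g -> deriv_within posR g dg y ->
  (g y - g x) / (y - x) <= dg y.
Proof.
  intros [x0 xy] Hc Hd.
  set (S := (g y - g x) / (y - x)).
  destruct (Rle_or_lt S (dg y)) as [|Hlt]; [assumption|exfalso].
  destruct (Hd (S - dg y)) as [del [Hdel Hq]]; [lra|].
  set (h := Rmin (del / 2) (y - x)).
  pose proof (Rmin_l (del / 2) (y - x)). pose proof (Rmin_r (del / 2) (y - x)).
  assert (h0 : 0 < h) by (apply Rmin_pos; lra).
  specialize (Hq (- h) ltac:(lra) ltac:(unfold posR, h in *; lra)
    ltac:(rewrite Rabs_left; unfold h in *; lra)).
  apply Rabs_def2 in Hq.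
  set (t := h / (y - x)).
  assert (Ht : 0 <= t <= 1).
  { unfold t. split; [apply Rle_mult_inv_pos; lra|].
    apply (Rmult_le_reg_r (y - x)); [lra|]. field_simplify; unfold h in *; lra. }
  specialize (Hc x y t ltac:(unfold posR; lra) ltac:(unfold posR; lra) Ht).
  replace (t * x + (1 - t) * y) with (y + - h) in Hc by (unfold t; field; lra).
  assert (S <= (g (y + - h) - g y) / - h); [|lra].
  unfold S. apply (Rmult_le_reg_r h); [lra|].
  replace ((g (y + - h) - g y) / - h * h) with (g y - g (y + - h)) by (field; lra).
  replace ((g y - g x) / (y - x) * h) with (t * (g y - g x)) by (unfold t; field; lra).
  lra.
Qed.

Lemma convex_second_deriv_nonneg (g dg d2g : R -> R) :
  C2_on posR g dg d2g -> convex_on posR g -> forall x, 0 < x -> 0 <= d2g x.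
Proof.
  intros [H1 [H2 _]] Hc x x0.
  destruct (Rle_or_lt 0 (d2g x)) as [|Hn]; [assumption|exfalso].
  destruct (neg_deriv_drop_right posR dg d2g x (x + 1) ltac:(lra)
              ltac:(intros z Hz; unfold posR; lra) (H2 x x0) Hn) as [u [Hu Hdu]].
  pose proof (convex_tangent_below_chord g dg x u ltac:(lra) Hc (H1 x x0)).
  pose proof (convex_tangent_above_chord g dg x u ltac:(lra) Hc
                (H1 u ltac:(unfold posR; lra))).
  lra.
Qed.

Lemma Rmin_ratio_mul (a b s : R) : 0 < b -> Rmin (a / b) s * b <= a.
Proof.
  intros Hb. pose proof (Rmin_l (a / b) s).
  replace a with (a / b * b) at 2 by (field; lra). apply Rmult_le_compat_r; lra.
Qed.

Lemma Rmax_ratio_mul (a b s : R) : 0 < b -> a <= Rmax (a / b) s * b.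
Proof.
  intros Hb. pose proof (Rmax_l (a / b) s).
  replace a with (a / b * b) at 1 by (field; lra). apply Rmult_le_compat_r; lra.
Qed.

Section DerivativeOfPhi.

Variables (dphi : R -> R) (t0 : R).
Hypothesis HA5 : forall v w, 0 < v -> v < w -> v * dphi v < w * dphi w.
Hypothesis Ht0 : 0 <= t0.
Hypothesis Hdphit0 : lim_within posR dphi t0 0 /\ (0 < t0 -> dphi t0 = 0).

Lemma dphi_pos_above (v : R) : 0 < v -> t0 < v -> 0 < dphi v.
Proof.
  intros vp tv. destruct (Rlt_or_le 0 t0) as [t0p|t0z].
  { pose proof (HA5 t0 v t0p tv). rewrite (proj2 Hdphit0 t0p) in H. nra. }
  (* t0 = 0: u phi'(u) is increasing and tends to 0 at 0+, hence nonnegative *)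
  assert (Hnn : forall u, 0 < u -> 0 <= u * dphi u).
  { intros u up. destruct (Rle_or_lt 0 (u * dphi u)) as [|Hlt]; [assumption|exfalso].
    destruct (proj1 Hdphit0 1 Rlt_0_1) as [alp [Halp Hnear]].
    set (w := Rmin (Rmin (alp / 2) (u / 2)) (- (u * dphi u) / 2)).
    pose proof (Rmin_l (Rmin (alp / 2) (u / 2)) (- (u * dphi u) / 2)).
    pose proof (Rmin_r (Rmin (alp / 2) (u / 2)) (- (u * dphi u) / 2)).
    pose proof (Rmin_l (alp / 2) (u / 2)). pose proof (Rmin_r (alp / 2) (u / 2)).
    assert (w0 : 0 < w) by (apply Rmin_pos; [apply Rmin_pos|]; lra).
    assert (Hw : Rabs (dphi w - 0) < 1).
    { apply Hnear; [unfold posR; lra| unfold w in *; lra |].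
      replace t0 with 0 by lra. rewrite Rminus_0_r, Rabs_right; unfold w in *; lra. }
    rewrite Rminus_0_r in Hw. apply Rabs_def2 in Hw.
    pose proof (HA5 w u w0 ltac:(unfold w in *; lra)). unfold w in *. nra. }
  pose proof (HA5 (v / 2) v ltac:(lra) ltac:(lra)).
  pose proof (Hnn (v / 2) ltac:(lra)). nra.
Qed.

Lemma dphi_nonpos_below (v : R) : 0 < v -> v <= t0 -> dphi v <= 0.
Proof.
  intros vp [vt| ->].
  - pose proof (HA5 v t0 vp vt). rewrite (proj2 Hdphit0 ltac:(lra)) in H. nra.
  - rewrite (proj2 Hdphit0 vp). lra.
Qed.

Lemma dphi_bracket (mu0 mu1 a b u v : R) :
  0 < mu0 -> mu0 <= a <= mu1 -> mu0 <= b <= mu1 -> 0 < u ->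
  mu1 * u < mu0 * v -> (t0 < u -> mu1 * dphi u < mu0 * dphi v) ->
  a * dphi u < b * dphi v.
Proof.
  intros m0 Ha Hb up Huv Hq.
  assert (uv : u < v) by nra.
  destruct (Rlt_or_le t0 u) as [Htu|Hut].
  - assert (dv : 0 < dphi v) by (apply dphi_pos_above; lra).
    specialize (Hq Htu). destruct (Rle_or_lt 0 (dphi u)); nra.
  - assert (du : dphi u <= 0) by (apply dphi_nonpos_below; lra).
    destruct (Rlt_or_le t0 v) as [Htv|Hvt].
    + assert (dv : 0 < dphi v) by (apply dphi_pos_above; lra). nra.
    + assert (dv : dphi v <= 0) by (apply dphi_nonpos_below; lra).
      pose proof (HA5 u v up uv).
      assert (K : mu1 * - dphi v < mu0 * - dphi u) by nra.
      nra.
Qed.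

(* By (A6), phi'(u)/phi'(v) <= q1(v/u) whenever v/u >= 1 and u > t0; as q1 is
   strictly decreasing, the ratio is < q1(s1) once v > eta u for some
   eta >= s1.  Symmetrically for q0. *)
Lemma dphi_below_q1 (q1 dq1 : R -> R) (s1 eta : R) :
  (forall s, 1 <= s ->
     is_lub (fun y => exists w, t0 < w /\ y = dphi w / dphi (s * w)) (q1 s)) ->
  (forall s, 1 <= s -> deriv_within (fun x => 1 <= x) q1 dq1 s /\ dq1 s < 0) ->
  1 <= s1 -> s1 <= eta ->
  forall u v, 0 < u -> t0 < u -> eta * u < v -> dphi u < q1 s1 * dphi v.
Proof.
  intros Hq1 Hdq1 Hs1 Heta u v up tu Hv.
  assert (Hs : s1 < v / u) by (apply (Rmult_lt_reg_r u); [lra|]; field_simplify; nra).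
  assert (Hdec : q1 (v / u) < q1 s1).
  { apply (strict_decrease_of_neg_deriv (fun x => 1 <= x) q1 dq1); [lra| |].
    - intros; lra.
    - intros z Hz. apply Hdq1. lra. }
  assert (Hle : dphi u / dphi v <= q1 (v / u)).
  { apply (proj1 (Hq1 (v / u) ltac:(lra))). exists u. split; [assumption|].
    replace (v / u * u) with v by (field; lra). reflexivity. }
  assert (dv : 0 < dphi v) by (apply dphi_pos_above; nra).
  replace (dphi u) with (dphi u / dphi v * dphi v) by (field; lra).
  nra.
Qed.

Lemma dphi_above_q0 (q0 dq0 : R -> R) (s0 eta : R) :
  (forall s, 0 < s <= 1 ->
     is_glb (fun y => exists w, t0 / s < w /\ y = dphi w / dphi (s * w)) (q0 s)) ->
  (forall s, 0 < s <= 1 -> deriv_within (fun x => 0 < x <= 1) q0 dq0 s /\ dq0 s < 0) ->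
  0 < s0 <= 1 -> eta <= s0 ->
  forall u v, 0 < u -> 0 < v -> t0 < v -> v < eta * u -> q0 s0 * dphi v < dphi u.
Proof.
  intros Hq0 Hdq0 Hs0 Heta u v up vp tv Hv.
  assert (Hs : v / u < s0) by (apply (Rmult_lt_reg_r u); [lra|]; field_simplify; nra).
  assert (sp : 0 < v / u) by (apply Rdiv_lt_0_compat; lra).
  assert (Hdec : q0 s0 < q0 (v / u)).
  { apply (strict_decrease_of_neg_deriv (fun x => 0 < x <= 1) q0 dq0); [lra| |].
    - intros; lra.
    - intros z Hz. apply Hdq0. lra. }
  assert (Hge : q0 (v / u) <= dphi u / dphi v).
  { apply (proj1 (Hq0 (v / u) ltac:(lra))). exists u. split.
    - replace (t0 / (v / u)) with (t0 * u / v) by (field; lra).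
      apply (Rmult_lt_reg_r v); [lra|]. field_simplify; [nra|lra].
    - replace (v / u * u) with v by (field; lra). reflexivity. }
  assert (dv : 0 < dphi v) by (apply dphi_pos_above; lra).
  replace (dphi u) with (dphi u / dphi v * dphi v) by (field; lra).
  nra.
Qed.

End DerivativeOfPhi.

Definition stretch (f r : R -> R) (x : R) : R := f (r x) / f x.
Definition ratio (f r dr : R -> R) (x : R) : R := dr x / stretch f r x.

Lemma stretch_pos (f r : R -> R) (x : R) :
  (forall y, 0 < y -> 0 < f y) -> 0 < x -> 0 < r x -> 0 < stretch f r x.
Proof. intros Hf Hx Hr. apply Rdiv_lt_0_compat; auto. Qed.

Lemma sign_from_balance (c d N t1 t2 B : R) :
  0 <= c -> 0 < N -> 0 <= B -> c * d = N * t1 - N * t2 * B ->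
  (t1 < 0 -> 0 < t2 -> d < 0) /\ (0 < t1 -> t2 < 0 -> 0 < d).
Proof.
  intros Hc HN HB E. split; intros H1 H2.
  - assert (N * t1 < 0) by nra. assert (0 <= N * t2 * B) by (apply Rmult_le_pos; [apply Rmult_le_pos|]; lra).
    destruct (Rlt_or_le d 0) as [|Hd]; [assumption|].
    assert (0 <= c * d) by (apply Rmult_le_pos; lra). lra.
  - assert (0 < N * t1) by nra. assert (0 <= N * - t2 * B) by (apply Rmult_le_pos; [apply Rmult_le_pos|]; lra).
    destruct (Rlt_or_le 0 d) as [|Hd]; [assumption|].
    assert (0 <= c * - d) by (apply Rmult_le_pos; lra). lra.
Qed.

Section EquilibriumSign.

Variables (n : nat) (f df dphi d2phi d2h r dr d2r : R -> R) (mu0 mu1 t0 : R).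
Hypothesis Hn : (2 <= n)%nat.
Hypothesis Hmu0 : 0 < mu0.
Hypothesis Hdfb : forall x, 0 <= x -> mu0 <= df x <= mu1.
Hypothesis Hfpos : forall x, 0 < x -> 0 < f x.
Hypothesis Hd2phi : forall v, 0 < v -> 0 <= d2phi v.
Hypothesis Hd2h : forall v, 0 < v -> 0 <= d2h v.
Hypothesis HA5 : forall v w, 0 < v -> v < w -> v * dphi v < w * dphi w.
Hypothesis Ht0 : 0 <= t0.
Hypothesis Hdphit0 : lim_within posR dphi t0 0 /\ (0 < t0 -> dphi t0 = 0).
Hypothesis Hr_pos : forall x, 0 < x < 1 -> 0 < r x.
Hypothesis Hdr_pos : forall x, 0 < x < 1 -> 0 < dr x.
Hypothesis Heq : forall rho, 0 < rho < 1 ->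
  equilibrium_eq n f df dphi d2phi d2h r dr d2r rho.

(* The coefficient of r'' in the equation is nonnegative, so the sign of r''
   is forced when the two brackets on the right-hand side have opposite signs. *)
Lemma d2r_sign (x : R) : 0 < x < 1 ->
  let tau := stretch f r x in
  (df (r x) * dphi tau < df x * dphi (dr x) -> df x * tau < df (r x) * dr x ->
   d2r x < 0) /\
  (df x * dphi (dr x) < df (r x) * dphi tau -> df (r x) * dr x < df x * tau ->
   0 < d2r x).
Proof.
  intros Hx tau.
  assert (Htau : 0 < tau) by (apply stretch_pos; auto; lra).
  assert (Hdr := Hdr_pos x Hx).
  assert (Hv : 0 < dr x * tau ^ (n - 1)) by (apply Rmult_lt_0_compat; [|apply pow_lt]; lra).
  assert (Hbal := sign_from_balance
    (f x * (d2phi (dr x) + d2h (dr x * tau ^ (n - 1)) * tau ^ (2 * (n - 1))))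
    (d2r x) (INR (n - 1))
    (df (r x) * dphi tau - df x * dphi (dr x)) (df (r x) * dr x - df x * tau)
    (d2h (dr x * tau ^ (n - 1)) * dr x * tau ^ (2 * n - 3))).
  destruct Hbal as [Hneg Hpos].
  - apply Rmult_le_pos; [left; apply Hfpos; lra|].
    apply Rplus_le_le_0_compat; [apply Hd2phi; lra|].
    apply Rmult_le_pos; [apply Hd2h; lra|apply pow_le; lra].
  - apply lt_0_INR. lia.
  - apply Rmult_le_pos; [apply Rmult_le_pos; [apply Hd2h|]|apply pow_le]; lra.
  - unfold tau, stretch. rewrite (Heq x Hx). ring.
  - split; intros; [apply Hneg|apply Hpos]; lra.
Qed.

(* Where P > eta1, r'' < 0, given that phi'(u)/phi'(v) < mu0/mu1 whenever
   v > eta1 u and u > t0 (this is what q1(s1) = mu0/mu1 provides). *)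
Lemma concave_when_fast (eta1 : R) :
  mu1 <= eta1 * mu0 ->
  (forall u v, 0 < u -> t0 < u -> eta1 * u < v -> dphi u < mu0 / mu1 * dphi v) ->
  forall x, 0 < x < 1 -> eta1 < ratio f r dr x -> d2r x < 0.
Proof.
  intros He Hq x Hx HP.
  assert (Htau : 0 < stretch f r x) by (apply stretch_pos; auto; lra).
  assert (Hfast : eta1 * stretch f r x < dr x).
  { unfold ratio in HP. apply (Rmult_lt_reg_r (/ stretch f r x));
      [apply Rinv_0_lt_compat; lra|].
    replace (eta1 * stretch f r x * / stretch f r x) with eta1 by (field; lra). exact HP. }
  assert (Hmu : mu1 * stretch f r x < mu0 * dr x) by nra.
  pose proof (Hdfb x ltac:(lra)). pose proof (Hdfb (r x) ltac:(pose proof (Hr_pos x Hx); lra)).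
  apply (proj1 (d2r_sign x Hx)).
  - apply (dphi_bracket dphi t0 HA5 Ht0 Hdphit0 mu0 mu1); auto.
    intros Ht. replace (mu0 * dphi (dr x)) with (mu1 * (mu0 / mu1 * dphi (dr x)))
      by (field; lra).
    apply Rmult_lt_compat_l; [lra|auto].
  - pose proof (Hdr_pos x Hx). nra.
Qed.

(* Where P < eta0, r'' > 0, given that phi'(u)/phi'(v) > mu1/mu0 whenever
   v < eta0 u and v > t0 (this is what q0(s0) = mu1/mu0 provides). *)
Lemma convex_when_slow (eta0 : R) :
  eta0 * mu1 <= mu0 ->
  (forall u v, 0 < u -> 0 < v -> t0 < v -> v < eta0 * u -> mu1 / mu0 * dphi v < dphi u) ->
  forall x, 0 < x < 1 -> ratio f r dr x < eta0 -> 0 < d2r x.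
Proof.
  intros He Hq x Hx HP.
  assert (Htau : 0 < stretch f r x) by (apply stretch_pos; auto; lra).
  assert (Hslow : dr x < eta0 * stretch f r x).
  { unfold ratio in HP. apply (Rmult_lt_reg_r (/ stretch f r x));
      [apply Rinv_0_lt_compat; lra|].
    replace (eta0 * stretch f r x * / stretch f r x) with eta0 by (field; lra). exact HP. }
  pose proof (Hdr_pos x Hx).
  pose proof (Hdfb x ltac:(lra)). pose proof (Hdfb (r x) ltac:(pose proof (Hr_pos x Hx); lra)).
  assert (Hmu : mu1 * dr x < mu0 * stretch f r x) by nra.
  apply (proj2 (d2r_sign x Hx)).
  - apply (dphi_bracket dphi t0 HA5 Ht0 Hdphit0 mu0 mu1); auto.
    intros Ht. replace (mu1 * dphi (dr x)) with (mu0 * (mu1 / mu0 * dphi (dr x)))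
      by (field; lra).
    apply Rmult_lt_compat_l; [lra|auto].
  - assert (df (r x) * dr x <= mu1 * dr x) by (apply Rmult_le_compat_r; lra).
    assert (mu0 * stretch f r x <= df x * stretch f r x) by (apply Rmult_le_compat_r; lra).
    lra.
Qed.

End EquilibriumSign.

Lemma small_near_zero (r : R -> R) (b eps : R) :
  lim_within posR r 0 0 -> 0 < b -> 0 < eps ->
  exists y, 0 < y < b /\ Rabs (r y) < eps.
Proof.
  intros Hr Hb Heps. destruct (Hr eps Heps) as [alp [Halp Hnear]].
  set (y := Rmin (alp / 2) (b / 2)).
  pose proof (Rmin_l (alp / 2) (b / 2)). pose proof (Rmin_r (alp / 2) (b / 2)).
  assert (y0 : 0 < y) by (apply Rmin_pos; lra).
  exists y. split; [unfold y in *; lra|].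
  rewrite <- (Rminus_0_r (r y)).
  apply Hnear; [unfold posR; lra|lra|].
  rewrite Rminus_0_r, Rabs_right; unfold y in *; lra.
Qed.

Lemma pos_of_increasing_from_zero (r dr : R -> R) :
  (forall z, 0 < z < 1 -> derivable_pt_lim r z (dr z)) ->
  (forall z, 0 < z < 1 -> 0 < dr z) ->
  lim_within posR r 0 0 -> forall z, 0 < z < 1 -> 0 < r z.
Proof.
  intros Hd Hpos Hr z Hz.
  destruct (MVT_cor2 r dr (z / 2) z ltac:(lra)) as [c [Hmv Hc]].
  { intros c Hc. apply Hd. lra. }
  pose proof (Hpos c ltac:(lra)).
  destruct (small_near_zero r (z / 2) (r z - r (z / 2)) Hr ltac:(lra) ltac:(nra))
    as [y [Hy Hry]].
  assert (Hmono : r y <= r (z / 2)).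
  { apply (nondecreasing_of_deriv_nonneg r dr); [lra| |];
      intros w Hw; [apply Hd|left; apply Hpos]; lra. }
  apply Rabs_def2 in Hry. lra.
Qed.

Lemma chord_below_tangent (r dr : R -> R) (x : R) :
  0 < x -> (forall z, 0 < z <= x -> derivable_pt_lim r z (dr z)) ->
  (forall z, 0 < z <= x -> dr z <= dr x) -> 0 <= dr x ->
  lim_within posR r 0 0 -> r x <= x * dr x.
Proof.
  intros Hx Hd Hmono Hdx Hr.
  destruct (Rle_or_lt (r x) (x * dr x)) as [|Hlt]; [assumption|exfalso].
  destruct (small_near_zero r x (r x - x * dr x) Hr Hx ltac:(lra)) as [y [Hy Hry]].
  apply Rabs_def2 in Hry.
  destruct (MVT_cor2 r dr y x ltac:(lra)) as [c [Hmv Hc]].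
  { intros c Hc. apply Hd. lra. }
  pose proof (Hmono c ltac:(lra)).
  assert (dr c * (x - y) <= dr x * (x - y)) by (apply Rmult_le_compat_r; lra).
  nra.
Qed.

(* A positive function cannot satisfy the Riccati inequality z P' <= - K P^2
   on all of (0, x]: G = 1/P - K ln z would be nondecreasing there, whereas
   G >= - K ln z tends to +oo at 0+. *)
Lemma no_positive_riccati_subsolution (P P' : R -> R) (K x : R) :
  0 < K -> 0 < x ->
  (forall z, 0 < z <= x -> derivable_pt_lim P z (P' z)) ->
  (forall z, 0 < z <= x -> 0 < P z) ->
  (forall z, 0 < z <= x -> z * P' z <= - K * P z ^ 2) -> False.
Proof.
  intros HK Hx Hd Hpos Hric.
  pose proof (Hpos x ltac:(lra)) as HPx.
  set (w := x * exp (- (1 / P x + 1) / K)).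
  assert (Hexp : exp (- (1 / P x + 1) / K) < 1).
  { assert (0 < 1 / P x) by (apply Rdiv_lt_0_compat; [lra|apply Hpos; lra]).
    assert (0 < (1 / P x + 1) / K) by (apply Rdiv_lt_0_compat; lra).
    assert (Hneg : - (1 / P x + 1) / K < 0).
    { replace (- (1 / P x + 1) / K) with (- ((1 / P x + 1) / K)) by (field; lra). lra. }
    pose proof (exp_increasing _ _ Hneg) as He. rewrite exp_0 in He. exact He. }
  assert (w0 : 0 < w) by (unfold w; pose proof (exp_pos (- (1 / P x + 1) / K)); nra).
  assert (wx : w < x) by (unfold w; nra).
  set (G := fun z => 1 / P z - K * ln z).
  assert (Hmono : G w <= G x).
  { apply (nondecreasing_of_deriv_nonneg G
             (fun z => (0 * P z - P' z * fct_cte 1 z) / Rsqr (P z) - K * / z)); [lra| |].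
    - intros z Hz. pose proof (Hpos z ltac:(lra)).
      apply derivable_pt_lim_minus.
      + apply (derivable_pt_lim_div (fct_cte 1) P z);
          [apply derivable_pt_lim_const|apply Hd; lra|lra].
      + apply derivable_pt_lim_scal, derivable_pt_lim_ln. lra.
    - intros z Hz. pose proof (Hpos z ltac:(lra)). pose proof (Hric z ltac:(lra)).
      unfold fct_cte, Rsqr.
      replace ((0 * P z - P' z * 1) / (P z * P z) - K * / z)
        with ((- (z * P' z) - K * P z ^ 2) / (z * (P z * P z))) by (field; lra).
      apply Rle_mult_inv_pos; [lra|]. apply Rmult_lt_0_compat; nra. }
  unfold G in Hmono.
  assert (Hlnw : K * ln w = K * ln x - (1 / P x + 1)).
  { unfold w. rewrite ln_mult, ln_exp; [field; lra|lra|apply exp_pos]. }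
  assert (0 < 1 / P w) by (apply Rdiv_lt_0_compat; [lra|apply Hpos; lra]).
  lra.
Qed.

Section RatioBarrier.

Variables (f df r dr d2r : R -> R) (mu0 mu1 eta0 eta1 : R).
Hypothesis Hmu0 : 0 < mu0.
Hypothesis Hfb : forall x, 0 <= x -> mu0 * x <= f x <= mu1 * x.
Hypothesis Hdfb : forall x, 0 <= x -> mu0 <= df x <= mu1.
Hypothesis Hdf : forall x, 0 < x -> derivable_pt_lim f x (df x).
Hypothesis Hdr : forall x, 0 < x < 1 -> derivable_pt_lim r x (dr x).
Hypothesis Hd2r : forall x, 0 < x < 1 -> derivable_pt_lim dr x (d2r x).
Hypothesis Hdr_pos : forall x, 0 < x < 1 -> 0 < dr x.
Hypothesis Hr_pos : forall x, 0 < x < 1 -> 0 < r x.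
Hypothesis Hreg : lim_within posR r 0 0.
Hypothesis Heta0 : 0 < eta0.
Hypothesis Heta0_le : eta0 * mu1 <= mu0.
Hypothesis Heta1 : mu1 <= eta1 * mu0.
Hypothesis Hconvex : forall x, 0 < x < 1 -> ratio f r dr x < eta0 -> 0 < d2r x.
Hypothesis Hconcave : forall x, 0 < x < 1 -> eta1 < ratio f r dr x -> d2r x < 0.

Lemma mu1_pos : 0 < mu1.
Proof. pose proof (Hdfb 0 (Rle_refl 0)). lra. Qed.

Lemma f_pos (x : R) : 0 < x -> 0 < f x.
Proof. intros Hx. pose proof (Hfb x ltac:(lra)). nra. Qed.

Lemma stretch_pos_in (x : R) : 0 < x < 1 -> 0 < stretch f r x.
Proof. intros Hx. apply stretch_pos; [exact f_pos|lra|auto]. Qed.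

Lemma stretch_bounds (x : R) : 0 < x < 1 ->
  mu0 * r x <= stretch f r x * (mu1 * x) /\ stretch f r x * (mu0 * x) <= mu1 * r x.
Proof.
  intros Hx. pose proof (Hr_pos x Hx).
  pose proof (Hfb x ltac:(lra)). pose proof (Hfb (r x) ltac:(lra)).
  pose proof (f_pos x ltac:(lra)).
  assert (E : stretch f r x * f x = f (r x)) by (unfold stretch; field; lra).
  pose proof (stretch_pos_in x Hx). split; nra.
Qed.

Lemma ratio_pos (x : R) : 0 < x < 1 -> 0 < ratio f r dr x.
Proof.
  intros Hx. apply Rdiv_lt_0_compat; [apply Hdr_pos|apply stretch_pos_in]; assumption.
Qed.

Lemma ratio_times_stretch (x : R) : 0 < x < 1 -> ratio f r dr x * stretch f r x = dr x.
Proof. intros Hx. pose proof (stretch_pos_in x Hx). unfold ratio. field. lra. Qed.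

Lemma ratio_derivative (x : R) : 0 < x < 1 ->
  derivable_pt_lim (ratio f r dr) x
    (d2r x / stretch f r x
     - ratio f r dr x * (df (r x) * ratio f r dr x - df x) / f x).
Proof.
  intros Hx. pose proof (f_pos x ltac:(lra)). pose proof (stretch_pos_in x Hx).
  assert (Hstretch : derivable_pt_lim (stretch f r) x
            ((df (r x) * dr x * f x - df x * f (r x)) / Rsqr (f x))).
  { apply (derivable_pt_lim_div (comp f r) f); [|apply Hdf; lra|lra].
    apply derivable_pt_lim_comp; [apply Hdr; assumption|apply Hdf, Hr_pos; assumption]. }
  assert (Hq := derivable_pt_lim_div dr (stretch f r) x _ _ (Hd2r x Hx) Hstretch
                  ltac:(lra)).
  match type of Hq with derivable_pt_lim _ _ ?l => replace l with
    (d2r x / stretch f r x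
     - ratio f r dr x * (df (r x) * ratio f r dr x - df x) / f x) in Hq end;
    [exact Hq|].
  unfold ratio, stretch in *. unfold Rsqr. field. split; [lra|].
  pose proof (f_pos (r x) (Hr_pos x Hx)). lra.
Qed.

(* Lower barrier: P >= eta0. If P(x) < eta0, then P < eta0 on (0, x], so r
   is convex there and r(x) <= x r'(x); this forces P(x) >= mu0/mu1. *)
Lemma ratio_lower (x : R) : 0 < x < 1 -> eta0 <= ratio f r dr x.
Proof.
  intros Hx. destruct (Rle_or_lt eta0 (ratio f r dr x)) as [|Hlow]; [assumption|exfalso].
  assert (Hbelow : forall z, 0 < z <= x -> ratio f r dr z < eta0).
  { intros z Hz. refine (barrier_from_left _ _ 0 1 eta0 ratio_derivative _ z x _ _ _ Hlow);
      try lra.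
    intros w Hw HPw.
    pose proof (Hconvex w Hw HPw). pose proof (stretch_pos_in w Hw).
    pose proof (ratio_pos w Hw). pose proof (f_pos w ltac:(lra)).
    pose proof (Hdfb w ltac:(lra)). pose proof (Hdfb (r w) ltac:(pose proof (Hr_pos w Hw); lra)).
    assert (df (r w) * ratio f r dr w <= mu1 * ratio f r dr w)
      by (apply Rmult_le_compat_r; lra).
    assert (mu1 * ratio f r dr w < mu1 * eta0) by (apply Rmult_lt_compat_l; [apply mu1_pos|lra]).
    assert (Hbr : df (r w) * ratio f r dr w - df w < 0) by lra.
    assert (0 < d2r w / stretch f r w) by (apply Rdiv_lt_0_compat; lra).
    assert (0 < - (ratio f r dr w * (df (r w) * ratio f r dr w - df w)) / f w)
      by (apply Rdiv_lt_0_compat; nra).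
    replace (- (ratio f r dr w * (df (r w) * ratio f r dr w - df w)) / f w)
      with (- (ratio f r dr w * (df (r w) * ratio f r dr w - df w) / f w)) in * by (field; lra).
    lra. }
  assert (Hchord : r x <= x * dr x).
  { apply chord_below_tangent; [lra| intros z Hz; apply Hdr; lra| |left; apply Hdr_pos; lra|exact Hreg].
    intros z Hz. apply (nondecreasing_of_deriv_nonneg dr d2r); [lra| |];
      intros w Hw; [apply Hd2r|left; apply Hconvex, Hbelow]; lra. }
  destruct (stretch_bounds x Hx) as [_ Hup].
  pose proof (ratio_times_stretch x Hx). pose proof (stretch_pos_in x Hx).
  assert (Hprod : stretch f r x * x * mu0 <= stretch f r x * x * (mu1 * ratio f r dr x)).
  { assert (mu1 * r x <= mu1 * (x * dr x))
      by (apply Rmult_le_compat_l; [left; apply mu1_pos|assumption]).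
    replace (stretch f r x * x * (mu1 * ratio f r dr x))
      with (mu1 * (x * (ratio f r dr x * stretch f r x))) by ring.
    rewrite (ratio_times_stretch x Hx).
    replace (stretch f r x * x * mu0) with (stretch f r x * (mu0 * x)) by ring.
    lra. }
  apply Rmult_le_reg_l in Hprod; [|nra].
  assert (ratio f r dr x * mu1 < eta0 * mu1)
    by (apply Rmult_lt_compat_r; [apply mu1_pos|assumption]).
  lra.
Qed.

(* If P(x) > eta1, then P stays above
   m = (eta1 + P(x))/2 on (0, x], so r is concave there and P satisfies a
   Riccati inequality z P' <= - K P^2, which no positive function can. *)
Lemma ratio_upper (x : R) : 0 < x < 1 -> ratio f r dr x <= eta1.
Proof.
  intros Hx. destruct (Rle_or_lt (ratio f r dr x) eta1) as [|Hhigh]; [assumption|exfalso].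
  set (P := ratio f r dr) in *.
  set (m := (eta1 + P x) / 2).
  assert (Heta1_pos : 0 < eta1) by (pose proof mu1_pos; nra).
  assert (Habove : forall z, 0 < z <= x -> m < P z).
  { intros z Hz. enough (- P z < - m) by lra.
    refine (barrier_from_left (fun w => - P w) _ 0 1 (- m) _ _ z x _ _ _ _);
      try (unfold m; lra).
    - intros w Hw. apply derivable_pt_lim_opp, ratio_derivative, Hw.
    - intros w Hw HPw.
      pose proof (Hconcave w Hw ltac:(unfold m in *; lra)). pose proof (stretch_pos_in w Hw).
      pose proof (f_pos w ltac:(lra)).
      pose proof (Hdfb w ltac:(lra)). pose proof (Hdfb (r w) ltac:(pose proof (Hr_pos w Hw); lra)).
      assert (Hbr : 0 < df (r w) * P w - df w) by (unfold m in *; nra).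
      assert (d2r w / stretch f r w < 0).
      { unfold Rdiv. assert (0 < / stretch f r w) by (apply Rinv_0_lt_compat; lra). nra. }
      assert (0 < P w * (df (r w) * P w - df w) / f w)
        by (apply Rdiv_lt_0_compat; [apply Rmult_lt_0_compat|]; unfold m in *; lra).
      cbv beta. fold P. lra. }
  set (K := mu0 * (1 - eta1 / m) / mu1).
  pose proof mu1_pos as Hmu1.
  assert (HK : 0 < K).
  { unfold K. apply Rdiv_lt_0_compat; [|lra]. apply Rmult_lt_0_compat; [lra|].
    assert (eta1 / m < 1); [|lra].
    apply (Rmult_lt_reg_r m); [unfold m; lra|]. field_simplify; unfold m in *; lra. }
  apply (no_positive_riccati_subsolution P
    (fun z => d2r z / stretch f r z - P z * (df (r z) * P z - df z) / f z) K x HK);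
    [lra| intros z Hz; apply ratio_derivative; lra| intros z Hz; apply ratio_pos; lra|].
  intros z Hz. assert (Hz' : 0 < z < 1) by lra.
  pose proof (Habove z Hz). pose proof (Hconcave z Hz' ltac:(unfold m in *; lra)).
  pose proof (stretch_pos_in z Hz'). pose proof (f_pos z ltac:(lra)).
  pose proof (Hfb z ltac:(lra)).
  pose proof (Hdfb z ltac:(lra)). pose proof (Hdfb (r z) ltac:(pose proof (Hr_pos z Hz'); lra)).
  assert (Hbr : K * mu1 * P z <= df (r z) * P z - df z).
  { assert (E : K * mu1 * P z = mu0 * P z - mu0 * eta1 * (P z / m))
      by (unfold K; field; unfold m in *; lra).
    assert (1 <= P z / m)
      by (apply (Rmult_le_reg_r m); [unfold m in *; lra|]; field_simplify; unfold m in *; lra).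
    assert (mu0 * eta1 * 1 <= mu0 * eta1 * (P z / m))
      by (apply Rmult_le_compat_l; [nra|assumption]).
    assert (mu0 * P z <= df (r z) * P z)
      by (apply Rmult_le_compat_r; unfold m in *; lra).
    lra. }
  assert (Hd2 : z * (d2r z / stretch f r z) <= 0).
  { unfold Rdiv. assert (0 < / stretch f r z) by (apply Rinv_0_lt_compat; lra).
    assert (d2r z * / stretch f r z < 0) by nra. nra. }
  assert (Hmain : K * P z ^ 2 <= z * (P z * (df (r z) * P z - df z) / f z)).
  { apply (Rmult_le_reg_r (f z)); [lra|].
    replace (z * (P z * (df (r z) * P z - df z) / f z) * f z)
      with (z * P z * (df (r z) * P z - df z)) by (field; lra).
    assert (0 < P z) by (unfold m in *; lra).
    assert (K * P z ^ 2 * f z <= K * P z ^ 2 * (mu1 * z)) by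
      (apply Rmult_le_compat_l; [apply Rmult_le_pos; [lra|apply pow_le]|]; lra).
    assert (z * P z * (K * mu1 * P z) <= z * P z * (df (r z) * P z - df z))
      by (apply Rmult_le_compat_l; nra).
    nra. }
  replace (z * (d2r z / stretch f r z - P z * (df (r z) * P z - df z) / f z))
    with (z * (d2r z / stretch f r z) - z * (P z * (df (r z) * P z - df z) / f z)) by ring.
  lra.
Qed.

Lemma log_derivative_bounds (z : R) : 0 < z < 1 ->
  eta0 * mu0 / mu1 * r z <= z * dr z <= eta1 * mu1 / mu0 * r z.
Proof.
  intros Hz. pose proof mu1_pos as Hmu1.
  pose proof (ratio_lower z Hz). pose proof (ratio_upper z Hz).
  pose proof (ratio_times_stretch z Hz) as Hdr_eq. pose proof (stretch_pos_in z Hz).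
  destruct (stretch_bounds z Hz) as [Hlo Hhi].
  split.
  - apply (Rmult_le_reg_l mu1); [lra|].
    replace (mu1 * (eta0 * mu0 / mu1 * r z)) with (eta0 * (mu0 * r z)) by (field; lra).
    assert (eta0 * (mu0 * r z) <= eta0 * (stretch f r z * (mu1 * z)))
      by (apply Rmult_le_compat_l; lra).
    assert (eta0 * stretch f r z * (mu1 * z) <= ratio f r dr z * stretch f r z * (mu1 * z))
      by (apply Rmult_le_compat_r; [nra|apply Rmult_le_compat_r; lra]).
    rewrite Hdr_eq in *. nra.
  - apply (Rmult_le_reg_l mu0); [lra|].
    replace (mu0 * (eta1 * mu1 / mu0 * r z)) with (eta1 * (mu1 * r z)) by (field; lra).
    assert (eta1 * (stretch f r z * (mu0 * z)) <= eta1 * (mu1 * r z))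
      by (apply Rmult_le_compat_l; nra).
    assert (ratio f r dr z * stretch f r z * (mu0 * z) <= eta1 * stretch f r z * (mu0 * z))
      by (apply Rmult_le_compat_r; [nra|apply Rmult_le_compat_r; lra]).
    rewrite Hdr_eq in *. nra.
Qed.

End RatioBarrier.

Theorem corollary4p4
  (n : nat) (kappa f df : R -> R)
  (phi dphi d2phi h dh d2h : R -> R) (t0 : R) (q0 dq0 q1 dq1 : R -> R)
  (mu0 mu1 : R) (r dr d2r : R -> R) (lambda : R)
  (* setting *)
  (Hn : (2 <= n)%nat)
  (Hkappa : forall x, 0 <= x -> cont_within nonnegR kappa x)
  (Hmuplus : exists L, improper_int_0_inf (fun s => s * pos_part (kappa s)) L
                       /\ L <= 1)
  (Hmuminus : exists L, improper_int_0_inf (fun s => s * neg_part (kappa s)) L)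
  (Hf1 : forall x, 0 <= x -> deriv_within nonnegR f df x)
  (Hf2 : forall x, 0 <= x -> deriv_within nonnegR df (fun s => - kappa s * f s) x)
  (Hf0 : f 0 = 0) (Hdf0 : df 0 = 1)
  (* (A1) *)
  (HhC2 : C2_on posR h dh d2h)
  (Hhconv : strictly_convex_on posR h)
  (* (A4) *)
  (HphiC2 : C2_on posR phi dphi d2phi)
  (Hphipos : forall v, 0 < v -> 0 < phi v)
  (Hphiconv : convex_on posR phi)
  (* (A5) *)
  (HA5 : forall v w, 0 < v -> v < w -> v * dphi v < w * dphi w)
  (* (A6) *)
  (Ht0 : 0 <= t0)
  (Hdphit0 : lim_within posR dphi t0 0 /\ (0 < t0 -> dphi t0 = 0))
  (Hq1 : forall s, 1 <= s ->
     is_lub (fun y => exists v, t0 < v /\ y = dphi v / dphi (s * v)) (q1 s))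
  (Hq0 : forall s, 0 < s <= 1 ->
     is_glb (fun y => exists v, t0 / s < v /\ y = dphi v / dphi (s * v)) (q0 s))
  (Hq1C1 : forall s, 1 <= s ->
     deriv_within (fun x => 1 <= x) q1 dq1 s /\
     cont_within (fun x => 1 <= x) dq1 s /\ dq1 s < 0)
  (Hq0C1 : forall s, 0 < s <= 1 ->
     deriv_within (fun x => 0 < x <= 1) q0 dq0 s /\
     cont_within (fun x => 0 < x <= 1) dq0 s /\ dq0 s < 0)
  (Hq1lim : lim_at_infty q1 0)
  (Hq0lim : to_infty_at_0plus q0)
  (* constants mu0, mu1 *)
  (Hmu0 : 0 < mu0) (Hmu01 : mu0 <= mu1)
  (Hdfb : forall x, 0 <= x -> mu0 <= df x <= mu1)
  (Hfb : forall x, 0 <= x -> mu0 * x <= f x <= mu1 * x)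
  (* r is a regular equilibrium solution with r(1) = lambda > 0 *)
  (Hr1 : forall x, 0 < x <= 1 ->
     deriv_within (fun y => 0 < y <= 1) r dr x /\
     cont_within (fun y => 0 < y <= 1) dr x /\ 0 < dr x)
  (Hr2 : forall x, 0 < x < 1 -> deriv_within (fun y => 0 < y < 1) dr d2r x)
  (Hreg : lim_within posR r 0 0)
  (Hrl : r 1 = lambda) (Hlambda : 0 < lambda)
  (Heq : forall rho, 0 < rho < 1 ->
     equilibrium_eq n f df dphi d2phi d2h r dr d2r rho) :
  (* s0 = q0^{-1}(mu1/mu0), s1 = q1^{-1}(mu0/mu1) *)
  forall s0 s1, 0 < s0 <= 1 -> q0 s0 = mu1 / mu0 ->
    1 <= s1 -> q1 s1 = mu0 / mu1 ->
  let eta0 := Rmin (mu0 / mu1) s0 in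
  let eta1 := Rmax (mu1 / mu0) s1 in
  let c0 := eta0 * mu0 / mu1 in
  let c1 := eta1 * mu1 / mu0 in
  forall rho, 0 < rho <= 1 ->
    lambda * Rpower rho c1 <= r rho <= lambda * Rpower rho c0.
Proof.
  intros s0 s1 Hs0 Hq0s0 Hs1 Hq1s1 eta0 eta1 c0 c1 rho Hrho.
  assert (Heta0 : 0 < eta0) by (apply Rmin_pos; [apply Rdiv_lt_0_compat|]; lra).
  pose proof (Rmin_ratio_mul mu0 mu1 s0 ltac:(lra)) as Heta0_le.
  pose proof (Rmax_ratio_mul mu1 mu0 s1 Hmu0) as Heta1_ge.
  assert (Hdf : forall x, 0 < x -> derivable_pt_lim f x (df x)) by (intros x Hx;
    apply (deriv_within_open nonnegR f df 0 (x + 1)); [unfold nonnegR; intros; lra|lra|apply Hf1; lra]).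
  assert (Hdr : forall x, 0 < x < 1 -> derivable_pt_lim r x (dr x)) by (intros x Hx;
    apply (deriv_within_open (fun y => 0 < y <= 1) r dr 0 1); [intros; lra|assumption|apply Hr1; lra]).
  assert (Hd2r : forall x, 0 < x < 1 -> derivable_pt_lim dr x (d2r x)) by (intros x Hx;
    apply (deriv_within_open (fun y => 0 < y < 1) dr d2r 0 1); [intros; lra|assumption|apply Hr2, Hx]).
  assert (Hdr_pos : forall x, 0 < x < 1 -> 0 < dr x) by (intros x Hx; apply Hr1; lra).
  assert (Hr_pos := pos_of_increasing_from_zero r dr Hdr Hdr_pos Hreg).
  assert (Hfpos : forall x, 0 < x -> 0 < f x) by (intros x Hx; pose proof (Hfb x ltac:(lra)); nra).
  assert (Hd2phi := convex_second_deriv_nonneg phi dphi d2phi HphiC2 Hphiconv).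
  assert (Hd2h := convex_second_deriv_nonneg h dh d2h HhC2 (strictly_convex_convex h Hhconv)).
  (* (A6) at s1 and s0 controls phi'(u)/phi'(v) outside the band *)
  assert (Hfast := dphi_below_q1 dphi t0 HA5 Ht0 Hdphit0 q1 dq1 s1 eta1 Hq1
    ltac:(intros s Hs; split; apply Hq1C1, Hs) Hs1 (Rmax_r _ _)).
  assert (Hslow := dphi_above_q0 dphi t0 HA5 Ht0 Hdphit0 q0 dq0 s0 eta0 Hq0
    ltac:(intros s Hs; split; apply Hq0C1, Hs) Hs0 (Rmin_r _ _)).
  rewrite Hq1s1 in Hfast. rewrite Hq0s0 in Hslow.
  assert (Hconcave := concave_when_fast n f df dphi d2phi d2h r dr d2r mu0 mu1 t0
    Hn Hmu0 Hdfb Hfpos Hd2phi Hd2h HA5 Ht0 Hdphit0 Hr_pos Hdr_pos Heq eta1 Heta1_ge Hfast).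
  assert (Hconvex := convex_when_slow n f df dphi d2phi d2h r dr d2r mu0 mu1 t0
    Hn Hmu0 Hdfb Hfpos Hd2phi Hd2h HA5 Ht0 Hdphit0 Hr_pos Hdr_pos Heq eta0 Heta0_le Hslow).
  assert (Hlog : forall z, 0 < z < 1 -> c0 * r z <= z * dr z <= c1 * r z)
    by (apply (log_derivative_bounds f df r dr d2r mu0 mu1 eta0 eta1); assumption).
  assert (Hcont : cont_within (fun y => 0 < y <= 1) r 1)
    by (apply (deriv_within_cont _ r dr), Hr1; lra).
  rewrite <- Hrl. split.
  - apply (power_lower_of_log_derivative r dr c1); [exact Hdr|apply Hlog|exact Hcont|exact Hrho].
  - apply (power_upper_of_log_derivative r dr c0); [exact Hdr|apply Hlog|exact Hcont|exact Hrho].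
Qed.
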